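(* The interactive synthesis algorithm terminates after $O((n+m)\cdot|\bar{P}^*|^2)$ iterations, where $|\bar{P}^*|$ is the number of nodes in the AST of the true program $\bar{P}^*$, $n$ is the number of tables in the database, and $m$ is the number of columns in the database.
   Context: Setting: a DSL of database queries given by a context-free grammar with select, project and inner-join operations; holes are either tables in a sequence of inner-joins (nonterminal $I$) or columns (nonterminal $C$). A sketch is a program with holes; a refinement fills holes with grammar expressions; a completion is a refinement with no holes. $\bar{P}^*$ is the true (user-intended) complete program, assumed derivable from the user's initial sketch, and the user oracle answers $\mathcal{O}(Q)=\mathbb{I}[Q\xRightarrow{*}\bar{P}^*]$. The algorithm keeps a current sketch $P$ and a set $\mathcal{N}$ of rejected questions; each iteration it forms the candidate questions (refinements of $P$ filling one hole, and all same-named holes, with a column $c_i$, a table $t_i$, or $t_i\Join_{C,C}I$) minus $\mathcal{N}$, asks the user about one of them $\hat Q$, and sets $P\gets\hat Q$ if accepted, else adds $\hat Q$ to $\mathcal{N}$; it stops when $P$ has no holes. *)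

From Stdlib Require Import List Arith Relations.
Import ListNotations.

Inductive colexpr : Type :=
| CHole (h : nat)
| Col (i : nat).

Inductive cmpop : Type := OpEq | OpNeq | OpLt | OpLe | OpGt | OpGe.

Inductive pred : Type :=
| PCmpConst (o : cmpop) (c : colexpr) (v : nat)
| PCmpCol (o : cmpop) (c1 c2 : colexpr)
| PAnd (p1 p2 : pred)
| POr (p1 p2 : pred)
| PNot (p : pred).

Inductive joinexpr : Type :=
| JHole (h : nat)
| JTable (i : nat)
| JJoin (i : nat) (c1 c2 : colexpr) (j : joinexpr).

Inductive query : Type :=
| QProject (cols : list colexpr) (q : query)
| QSelect (p : pred) (q : query)
| QJoin (j : joinexpr).

Definition size_col (c : colexpr) : nat := 1.

Fixpoint size_pred (p : pred) : nat :=
  match p with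
  | PCmpConst _ c _ => 3 + size_col c
  | PCmpCol _ c1 c2 => 2 + size_col c1 + size_col c2
  | PAnd p1 p2 | POr p1 p2 => 1 + size_pred p1 + size_pred p2
  | PNot p => 1 + size_pred p
  end.

Fixpoint size_join (j : joinexpr) : nat :=
  match j with
  | JHole _ => 1
  | JTable _ => 1
  | JJoin _ c1 c2 j => 2 + size_col c1 + size_col c2 + size_join j
  end.

Fixpoint size_query (q : query) : nat :=
  match q with
  | QProject l q => 1 + list_sum (map size_col l) + size_query q
  | QSelect p q => 1 + size_pred p + size_query q
  | QJoin j => size_join j
  end.

Definition choles_col (c : colexpr) : list nat :=
  match c with CHole h => [h] | Col _ => [] end.

Fixpoint choles_pred (p : pred) : list nat :=
  match p with
  | PCmpConst _ c _ => choles_col c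
  | PCmpCol _ c1 c2 => choles_col c1 ++ choles_col c2
  | PAnd p1 p2 | POr p1 p2 => choles_pred p1 ++ choles_pred p2
  | PNot p => choles_pred p
  end.

Fixpoint choles_join (j : joinexpr) : list nat :=
  match j with
  | JHole _ | JTable _ => []
  | JJoin _ c1 c2 j => choles_col c1 ++ choles_col c2 ++ choles_join j
  end.

Fixpoint choles (q : query) : list nat :=
  match q with
  | QProject l q => flat_map choles_col l ++ choles q
  | QSelect p q => choles_pred p ++ choles q
  | QJoin j => choles_join j
  end.

Fixpoint jholes_join (j : joinexpr) : list nat :=
  match j with
  | JHole h => [h]
  | JTable _ => []
  | JJoin _ _ _ j => jholes_join j
  end.

Fixpoint jholes (q : query) : list nat :=
  match q with
  | QProject _ q | QSelect _ q => jholes q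
  | QJoin j => jholes_join j
  end.

Definition has_hole (q : query) : Prop := choles q <> [] \/ jholes q <> [].
Definition complete (q : query) : Prop := choles q = [] /\ jholes q = [].

Definition substC_col (h : nat) (e : colexpr) (c : colexpr) : colexpr :=
  match c with
  | CHole h' => if Nat.eqb h' h then e else c
  | Col _ => c
  end.

Fixpoint substC_pred (h : nat) (e : colexpr) (p : pred) : pred :=
  match p with
  | PCmpConst o c v => PCmpConst o (substC_col h e c) v
  | PCmpCol o c1 c2 => PCmpCol o (substC_col h e c1) (substC_col h e c2)
  | PAnd p1 p2 => PAnd (substC_pred h e p1) (substC_pred h e p2)
  | POr p1 p2 => POr (substC_pred h e p1) (substC_pred h e p2)
  | PNot p => PNot (substC_pred h e p)
  end.

Fixpoint substC_join (h : nat) (e : colexpr) (j : joinexpr) : joinexpr :=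
  match j with
  | JHole _ | JTable _ => j
  | JJoin i c1 c2 j => JJoin i (substC_col h e c1) (substC_col h e c2) (substC_join h e j)
  end.

Fixpoint substC (h : nat) (e : colexpr) (q : query) : query :=
  match q with
  | QProject l q => QProject (map (substC_col h e) l) (substC h e q)
  | QSelect p q => QSelect (substC_pred h e p) (substC h e q)
  | QJoin j => QJoin (substC_join h e j)
  end.

Fixpoint substJ_join (h : nat) (e : joinexpr) (j : joinexpr) : joinexpr :=
  match j with
  | JHole h' => if Nat.eqb h' h then e else j
  | JTable _ => j
  | JJoin i c1 c2 j => JJoin i c1 c2 (substJ_join h e j)
  end.

Fixpoint substJ (h : nat) (e : joinexpr) (q : query) : query :=
  match q with
  | QProject l q => QProject l (substJ h e q)
  | QSelect p q => QSelect p (substJ h e q)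
  | QJoin j => QJoin (substJ_join h e j)
  end.

(* One grammar expansion of one hole name (all occurrences of that name). *)
Definition refine1 (n m : nat) (P Q : query) : Prop :=
  (exists h i, In h (choles P) /\ i < m /\ Q = substC h (Col i) P)
  \/ (exists h i, In h (jholes P) /\ i < n /\ Q = substJ h (JTable i) P)
  \/ (exists h i a b c, In h (jholes P) /\ i < n /\
        ~ In a (choles P) /\ ~ In b (choles P) /\ a <> b /\ ~ In c (jholes P) /\
        Q = substJ h (JJoin i (CHole a) (CHole b) (JHole c)) P).

Definition derives (n m : nat) : query -> query -> Prop :=
  clos_refl_trans query (refine1 n m).

Definition freshC (P : query) : nat := S (list_max (choles P)).
Definition freshJ (P : query) : nat := S (list_max (jholes P)).

Definition candidates (n m : nat) (P : query) : list query :=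
  flat_map (fun h => map (fun i => substC h (Col i) P) (seq 0 m)) (choles P)
  ++ flat_map (fun h =>
        map (fun i => substJ h (JTable i) P) (seq 0 n)
        ++ map (fun i => substJ h (JJoin i (CHole (freshC P)) (CHole (S (freshC P)))
                                          (JHole (freshJ P))) P) (seq 0 n))
       (jholes P).

(* state = (current sketch P, rejected questions N) *)
Definition state : Type := (query * list query)%type.

(* One iteration, with the user oracle O(Q) = [Q =>* Pstar]; the choice of
   the asked question among the candidates is arbitrary. *)
Inductive iter_step (n m : nat) (Pstar : query) : state -> state -> Prop :=
| step_accept (P : query) (N : list query) (Q : query) :
    has_hole P -> In Q (candidates n m P) -> ~ In Q N ->
    derives n m Q Pstar ->
    iter_step n m Pstar (P, N) (Q, N)
| step_reject (P : query) (N : list query) (Q : query) :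
    has_hole P -> In Q (candidates n m P) -> ~ In Q N ->
    ~ derives n m Q Pstar ->
    iter_step n m Pstar (P, N) (P, Q :: N).

Inductive iter_n (n m : nat) (Pstar : query) : nat -> state -> state -> Prop :=
| iter_n_0 s : iter_n n m Pstar 0 s s
| iter_n_S k s1 s2 s3 :
    iter_step n m Pstar s1 s2 -> iter_n n m Pstar k s2 s3 ->
    iter_n n m Pstar (S k) s1 s3.

(* Every candidate is a one-step refinement, and a refinement [P -> Q] strictly decreases
   2 (|P*| - |P|) + #holes(P), which is at most 2 |P*| for a sketch below P*: hence at most
   2 |P*| questions are accepted.  A sketch of size at most |P*| has at most (m + 2n) |P*|
   candidates and no question is asked twice, so between two acceptances there are at most
   that many rejections.  The algorithm never gets stuck because the first step of a
   derivation of P* from P is a candidate up to the names of the fresh holes it introduces,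
   and injectively renaming holes preserves derivations of the complete program P*. *)

From Stdlib Require Import List Arith Relations Lia.
Import ListNotations.

Definition hole_count (q : query) : nat := length (choles q) + length (jholes q).

Lemma hole_count_le_size q : hole_count q <= size_query q.
Proof.
  assert (Hcol : forall c, length (choles_col c) <= 1) by (destruct c; cbn; lia).
  assert (Hpred : forall p, length (choles_pred p) <= size_pred p).
  { induction p; cbn; unfold size_col; rewrite ?length_app;
      try pose proof (Hcol c); try pose proof (Hcol c1); try pose proof (Hcol c2); lia. }
  assert (Hjoin : forall j, length (choles_join j) + length (jholes_join j) <= size_join j).
  { induction j; cbn; unfold size_col; rewrite ?length_app; try lia.
    pose proof (Hcol c1); pose proof (Hcol c2); lia. }
  assert (Hcols : forall l, length (flat_map choles_col l) <= list_sum (map size_col l)).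
  { unfold list_sum; induction l as [|c l IH]; cbn; rewrite ?length_app;
      try pose proof (Hcol c); lia. }
  unfold hole_count; induction q; cbn; rewrite ?length_app.
  - pose proof (Hcols cols); lia.
  - pose proof (Hpred p); lia.
  - apply Hjoin.
Qed.

Lemma size_substC h e q : size_query (substC h e q) = size_query q.
Proof.
  assert (Hpred : forall p, size_pred (substC_pred h e p) = size_pred p)
    by (induction p; cbn; auto).
  assert (Hjoin : forall j, size_join (substC_join h e j) = size_join j)
    by (induction j; cbn; auto).
  induction q; cbn; auto.
  rewrite map_map, IHq; reflexivity.
Qed.

Lemma choles_substC h i q :
  choles (substC h (Col i) q) = remove Nat.eq_dec h (choles q).
Proof.
  assert (Hcol : forall c,
             choles_col (substC_col h (Col i) c) = remove Nat.eq_dec h (choles_col c)).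
  { destruct c as [h'|]; cbn; auto.
    destruct (Nat.eqb_spec h' h), (Nat.eq_dec h h'); subst; cbn; congruence. }
  assert (Hpred : forall p,
             choles_pred (substC_pred h (Col i) p) = remove Nat.eq_dec h (choles_pred p))
    by (induction p; cbn; rewrite ?remove_app, ?Hcol; congruence).
  assert (Hjoin : forall j,
             choles_join (substC_join h (Col i) j) = remove Nat.eq_dec h (choles_join j))
    by (induction j; cbn; rewrite ?remove_app, ?Hcol; congruence).
  induction q; cbn; rewrite ?remove_app; try congruence.
  f_equal; auto.
  induction cols as [|c cols IH]; cbn; auto.
  rewrite remove_app, Hcol, IH; reflexivity.
Qed.

Lemma jholes_substC h e q : jholes (substC h e q) = jholes q.
Proof. induction q; cbn; auto. induction j; cbn; auto. Qed.

Lemma size_substJ h e q :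
  In h (jholes q) -> size_query (substJ h e q) + 1 = size_query q + size_join e.
Proof.
  induction q; cbn; intros Hh; try (rewrite <- ?Nat.add_assoc, <- IHq; auto; lia).
  induction j; cbn in *; try tauto.
  - destruct Hh as [<- | []]; rewrite Nat.eqb_refl; lia.
  - specialize (IHj Hh); lia.
Qed.

Lemma choles_substJ h e q :
  In h (jholes q) -> choles (substJ h e q) = choles q ++ choles_join e.
Proof.
  induction q; cbn; intros Hh; try (rewrite IHq, app_assoc; auto).
  induction j; cbn in *; try tauto.
  - destruct Hh as [<- | []]; rewrite Nat.eqb_refl; reflexivity.
  - rewrite IHj, !app_assoc; auto.
Qed.

Lemma jholes_substJ h e q :
  In h (jholes q) -> jholes (substJ h e q) = jholes_join e.
Proof.
  induction q; cbn; intros Hh; auto.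
  induction j; cbn in *; try tauto.
  destruct Hh as [<- | []]; rewrite Nat.eqb_refl; reflexivity.
Qed.

Lemma refine1_size_le n m P Q : refine1 n m P Q -> size_query P <= size_query Q.
Proof.
  intros [(h & i & Hh & _ & ->) | [(h & i & Hh & _ & ->)
         | (h & i & a & b & c & Hh & _ & _ & _ & _ & _ & ->)]].
  - rewrite size_substC; lia.
  - pose proof (size_substJ h (JTable i) P Hh); cbn in *; lia.
  - pose proof (size_substJ h (JJoin i (CHole a) (CHole b) (JHole c)) P Hh); cbn in *; lia.
Qed.

Lemma derives_size_le n m P Q : derives n m P Q -> size_query P <= size_query Q.
Proof. induction 1; eauto using refine1_size_le; lia. Qed.

(* The factor 2 covers the join expansion, which adds 4 nodes but only 2 holes. *)
Lemma refine1_progress n m P Q :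
  refine1 n m P Q -> 2 * size_query P + hole_count Q < 2 * size_query Q + hole_count P.
Proof.
  unfold hole_count.
  intros [(h & i & Hh & _ & ->) | [(h & i & Hh & _ & ->)
         | (h & i & a & b & c & Hh & _ & _ & _ & _ & _ & ->)]].
  - rewrite size_substC, choles_substC, jholes_substC.
    pose proof (remove_length_lt Nat.eq_dec (choles P) h Hh); lia.
  - pose proof (size_substJ h (JTable i) P Hh).
    rewrite choles_substJ, jholes_substJ, length_app by exact Hh.
    destruct (jholes P); cbn in *; [tauto | lia].
  - pose proof (size_substJ h (JJoin i (CHole a) (CHole b) (JHole c)) P Hh).
    rewrite choles_substJ, jholes_substJ, length_app by exact Hh.
    destruct (jholes P); cbn in *; unfold size_col in *; [tauto | lia].
Qed.

Lemma eqb_inj (f : nat -> nat) :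
  (forall x y, f x = f y -> x = y) -> forall x y, (f x =? f y) = (x =? y).
Proof.
  intros f_inj x y.
  destruct (Nat.eqb_spec x y) as [-> | Hne]; [apply Nat.eqb_refl |].
  apply Nat.eqb_neq; intros E; apply Hne, f_inj, E.
Qed.

Lemma in_map_inj (f : nat -> nat) :
  (forall x y, f x = f y -> x = y) -> forall x l, In (f x) (map f l) <-> In x l.
Proof.
  intros f_inj x l; split; [| apply in_map].
  intros (y & E & Hy)%in_map_iff; apply f_inj in E; subst; exact Hy.
Qed.

Section Renaming.

Variables (s t : nat -> nat).

Definition rename_col (c : colexpr) : colexpr :=
  match c with CHole h => CHole (s h) | Col i => Col i end.

Fixpoint rename_pred (p : pred) : pred :=
  match p with
  | PCmpConst o c v => PCmpConst o (rename_col c) v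
  | PCmpCol o c1 c2 => PCmpCol o (rename_col c1) (rename_col c2)
  | PAnd p1 p2 => PAnd (rename_pred p1) (rename_pred p2)
  | POr p1 p2 => POr (rename_pred p1) (rename_pred p2)
  | PNot p => PNot (rename_pred p)
  end.

Fixpoint rename_join (j : joinexpr) : joinexpr :=
  match j with
  | JHole h => JHole (t h)
  | JTable i => JTable i
  | JJoin i c1 c2 j => JJoin i (rename_col c1) (rename_col c2) (rename_join j)
  end.

Fixpoint rename (q : query) : query :=
  match q with
  | QProject l q => QProject (map rename_col l) (rename q)
  | QSelect p q => QSelect (rename_pred p) (rename q)
  | QJoin j => QJoin (rename_join j)
  end.

Lemma rename_id_on q :
  (forall x, In x (choles q) -> s x = x) -> (forall x, In x (jholes q) -> t x = x) ->
  rename q = q.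
Proof.
  assert (Hcol : forall c, (forall x, In x (choles_col c) -> s x = x) -> rename_col c = c)
    by (destruct c; cbn; intros; f_equal; auto).
  assert (Hpred : forall p, (forall x, In x (choles_pred p) -> s x = x) -> rename_pred p = p).
  { induction p; cbn; intros H; f_equal; auto using in_or_app. }
  assert (Hjoin : forall j, (forall x, In x (choles_join j) -> s x = x) ->
                    (forall x, In x (jholes_join j) -> t x = x) -> rename_join j = j).
  { induction j; cbn; intros H H'; f_equal; auto 8 using in_or_app. }
  assert (Hcols : forall l,
             (forall x, In x (flat_map choles_col l) -> s x = x) -> map rename_col l = l).
  { induction l; cbn; intros H; f_equal; auto using in_or_app. }
  induction q; cbn; intros H H'; f_equal; auto using in_or_app.
Qed.

Lemma choles_rename q : choles (rename q) = map s (choles q).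
Proof.
  assert (Hcol : forall c, choles_col (rename_col c) = map s (choles_col c))
    by (destruct c; reflexivity).
  assert (Hpred : forall p, choles_pred (rename_pred p) = map s (choles_pred p))
    by (induction p; cbn; rewrite ?map_app, ?Hcol; congruence).
  assert (Hjoin : forall j, choles_join (rename_join j) = map s (choles_join j))
    by (induction j; cbn; rewrite ?map_app, ?Hcol; congruence).
  induction q; cbn; rewrite ?map_app; try congruence.
  f_equal; auto.
  induction cols; cbn; auto.
  rewrite map_app, Hcol; congruence.
Qed.

Lemma jholes_rename q : jholes (rename q) = map t (jholes q).
Proof. induction q; cbn; auto. induction j; cbn; auto. Qed.

Hypotheses (s_inj : forall x y, s x = s y -> x = y) (t_inj : forall x y, t x = t y -> x = y).

Lemma rename_substC h i q : rename (substC h (Col i) q) = substC (s h) (Col i) (rename q).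
Proof.
  assert (Hcol : forall c,
             rename_col (substC_col h (Col i) c) = substC_col (s h) (Col i) (rename_col c)).
  { destruct c as [h'|]; cbn; auto.
    rewrite eqb_inj by exact s_inj; destruct (h' =? h); reflexivity. }
  assert (Hpred : forall p,
             rename_pred (substC_pred h (Col i) p) = substC_pred (s h) (Col i) (rename_pred p))
    by (induction p; cbn; rewrite ?Hcol; congruence).
  assert (Hjoin : forall j,
             rename_join (substC_join h (Col i) j) = substC_join (s h) (Col i) (rename_join j))
    by (induction j; cbn; rewrite ?Hcol; congruence).
  induction q; cbn; try congruence.
  rewrite IHq, !map_map; f_equal; apply map_ext, Hcol.
Qed.

Lemma rename_substJ h e q : rename (substJ h e q) = substJ (t h) (rename_join e) (rename q).
Proof.
  induction q; cbn; try congruence.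
  induction j; cbn; try congruence.
  rewrite eqb_inj by exact t_inj. destruct (h0 =? h); reflexivity.
Qed.

Lemma refine1_rename n m P Q : refine1 n m P Q -> refine1 n m (rename P) (rename Q).
Proof.
  intros [(h & i & ? & ? & ->) | [(h & i & ? & ? & ->)
         | (h & i & a & b & c & ? & ? & ? & ? & ? & ? & ->)]].
  - left; exists (s h), i.
    rewrite choles_rename, in_map_inj, rename_substC by exact s_inj; auto.
  - right; left; exists (t h), i.
    rewrite jholes_rename, in_map_inj, rename_substJ by exact t_inj; auto.
  - right; right; exists (t h), i, (s a), (s b), (t c).
    rewrite jholes_rename, choles_rename, !in_map_inj, rename_substJ by assumption.
    repeat split; auto.
Qed.

Lemma derives_rename n m P Q : derives n m P Q -> derives n m (rename P) (rename Q).
Proof.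
  induction 1.
  - apply rt_step, refine1_rename; assumption.
  - apply rt_refl.
  - eapply rt_trans; eassumption.
Qed.

End Renaming.

Definition swap (u v x : nat) : nat := if x =? u then v else if x =? v then u else x.

Lemma swap_inj u v x y : swap u v x = swap u v y -> x = y.
Proof.
  unfold swap.
  destruct (Nat.eqb_spec x u), (Nat.eqb_spec x v), (Nat.eqb_spec y u), (Nat.eqb_spec y v); lia.
Qed.

Lemma swap_l u v : swap u v u = v.
Proof. unfold swap; rewrite Nat.eqb_refl; reflexivity. Qed.

Lemma swap_id u v x : x <> u -> x <> v -> swap u v x = x.
Proof. unfold swap; intros; destruct (Nat.eqb_spec x u), (Nat.eqb_spec x v); lia. Qed.

Lemma renaming2_exists a b a' b' :
  a <> b -> a' <> b' ->
  exists s : nat -> nat, (forall x y, s x = s y -> x = y) /\ s a = a' /\ s b = b' /\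
    (forall x, x <> a -> x <> b -> x <> a' -> x <> b' -> s x = x).
Proof.
  intros Hab Hab'.
  (* Swap a with a', then swap the new position of b with b'. *)
  set (b'' := swap a a' b).
  assert (Hb'' : b'' <> a') by (intros E; rewrite <- (swap_l a a') in E; apply swap_inj in E; auto).
  exists (fun x => swap b'' b' (swap a a' x)); repeat split.
  - intros x y E; apply swap_inj, swap_inj in E; exact E.
  - rewrite swap_l; apply swap_id; auto.
  - apply swap_l.
  - intros x Ha Hb Ha' Hb'.
    assert (Hx : x <> b'').
    { unfold b'', swap.
      destruct (Nat.eqb_spec b a), (Nat.eqb_spec b a'); congruence. }
    rewrite (swap_id a a' x), swap_id; auto.
Qed.

Lemma in_lt_succ_list_max x l : In x l -> x < S (list_max l).
Proof.
  intros Hx.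
  assert (Hle : Forall (fun k => k <= list_max l) l) by (apply list_max_le; lia).
  rewrite Forall_forall in Hle; specialize (Hle x Hx); lia.
Qed.

Definition fresh_join (i : nat) (P : query) : joinexpr :=
  JJoin i (CHole (freshC P)) (CHole (S (freshC P))) (JHole (freshJ P)).

Lemma in_candidates n m P Q :
  In Q (candidates n m P) <->
  (exists h i, In h (choles P) /\ i < m /\ Q = substC h (Col i) P) \/
  (exists h i, In h (jholes P) /\ i < n /\
     (Q = substJ h (JTable i) P \/ Q = substJ h (fresh_join i P) P)).
Proof.
  unfold candidates, fresh_join.
  rewrite in_app_iff, !in_flat_map.
  setoid_rewrite in_app_iff; setoid_rewrite in_map_iff; setoid_rewrite in_seq.
  split.
  - intros [(h & Hh & i & <- & _ & Hi) | (h & Hh & [(i & <- & _ & Hi) | (i & <- & _ & Hi)])].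
    + left; exists h, i; auto.
    + right; exists h, i; auto.
    + right; exists h, i; auto.
  - intros [(h & i & Hh & Hi & ->) | (h & i & Hh & Hi & [-> | ->])].
    + left; exists h; split; [| exists i]; auto with arith.
    + right; exists h; split; [| left; exists i]; auto with arith.
    + right; exists h; split; [| right; exists i]; auto with arith.
Qed.

Lemma length_candidates n m P :
  length (candidates n m P) = m * length (choles P) + 2 * n * length (jholes P).
Proof.
  unfold candidates.
  rewrite length_app, (flat_map_constant_length (c := m)), (flat_map_constant_length (c := 2 * n)).
  - lia.
  - intros; rewrite length_app, !length_map, length_seq; lia.
  - intros; rewrite length_map, length_seq; reflexivity.
Qed.

Lemma fresh_names_not_in P :
  ~ In (freshC P) (choles P) /\ ~ In (S (freshC P)) (choles P) /\
  freshC P <> S (freshC P) /\ ~ In (freshJ P) (jholes P).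
Proof.
  unfold freshC, freshJ.
  repeat split; try lia; intros H%in_lt_succ_list_max; lia.
Qed.

Lemma candidate_refine1 n m P Q : In Q (candidates n m P) -> refine1 n m P Q.
Proof.
  intros [(h & i & ?) | (h & i & Hh & Hi & [-> | ->])]%in_candidates.
  - left; exists h, i; assumption.
  - right; left; exists h, i; auto.
  - right; right; exists h, i, (freshC P), (S (freshC P)), (freshJ P).
    pose proof (fresh_names_not_in P); tauto.
Qed.

Lemma derives_join_rename n m P Pstar h i a b c a' b' c' :
  complete Pstar -> In h (jholes P) ->
  ~ In a (choles P) -> ~ In b (choles P) -> a <> b -> ~ In c (jholes P) ->
  ~ In a' (choles P) -> ~ In b' (choles P) -> a' <> b' -> ~ In c' (jholes P) ->
  derives n m (substJ h (JJoin i (CHole a) (CHole b) (JHole c)) P) Pstar ->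
  derives n m (substJ h (JJoin i (CHole a') (CHole b') (JHole c')) P) Pstar.
Proof.
  intros [HCstar HJstar] Hh Ha Hb Hab Hc Ha' Hb' Hab' Hc' D.
  destruct (renaming2_exists a b a' b' Hab Hab') as (s & s_inj & Esa & Esb & Hs).
  set (t := swap c c').
  assert (t_inj : forall x y, t x = t y -> x = y) by apply swap_inj.
  apply (derives_rename s t s_inj t_inj) in D.
  rewrite rename_substJ, (rename_id_on s t P), (rename_id_on s t Pstar) in D;
    rewrite ?HCstar, ?HJstar; cbn; try tauto.
  - assert (Hhc : h <> c) by (intros ->; contradiction).
    assert (Hhc' : h <> c') by (intros ->; contradiction).
    cbn in D; unfold t in D.
    rewrite swap_l, (swap_id c c' h), Esa, Esb in D by assumption; exact D.
  - intros x Hx; apply Hs; intros ->; contradiction.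
  - intros x Hx; apply swap_id; intros ->; contradiction.
Qed.

Lemma derives_candidate n m P Pstar :
  complete Pstar -> derives n m P Pstar -> has_hole P ->
  exists Q, In Q (candidates n m P) /\ derives n m Q Pstar.
Proof.
  intros Hstar D Hhole.
  apply clos_rt_rt1n in D; destruct D as [| P1 Pstar R D].
  { destruct Hstar, Hhole; contradiction. }
  apply clos_rt1n_rt in D.
  destruct R as [(h & i & Hh & Hi & ->) | [(h & i & Hh & Hi & ->)
                | (h & i & a & b & c & Hh & Hi & Ha & Hb & Hab & Hc & ->)]].
  - exists (substC h (Col i) P); split; [apply in_candidates; left; eauto | exact D].
  - exists (substJ h (JTable i) P).
    split; [apply in_candidates; right; exists h, i; auto | exact D].
  - exists (substJ h (fresh_join i P) P); split; [apply in_candidates; right; exists h, i; auto |].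
    destruct (fresh_names_not_in P) as (Ha' & Hb' & Hab' & Hc').
    apply (derives_join_rename n m P Pstar h i a b c); assumption.
Qed.

Definition query_eq_dec : forall P Q : query, {P = Q} + {P <> Q}.
Proof.
  assert (col_eq_dec : forall c c' : colexpr, {c = c'} + {c <> c'})
    by (decide equality; apply Nat.eq_dec).
  assert (cmpop_eq_dec : forall o o' : cmpop, {o = o'} + {o <> o'})
    by decide equality.
  assert (pred_eq_dec : forall p p' : pred, {p = p'} + {p <> p'})
    by (decide equality; apply Nat.eq_dec).
  assert (join_eq_dec : forall j j' : joinexpr, {j = j'} + {j <> j'})
    by (decide equality; apply Nat.eq_dec).
  decide equality; apply (list_eq_dec col_eq_dec).
Defined.

Fixpoint unasked (N l : list query) : list query :=
  match N with
  | [] => l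
  | Q :: N => remove query_eq_dec Q (unasked N l)
  end.

Lemma unasked_length_le N l : length (unasked N l) <= length l.
Proof.
  induction N as [|Q N IH]; cbn; [lia |].
  pose proof (remove_length_le query_eq_dec (unasked N l) Q); lia.
Qed.

Lemma in_unasked Q N l : In Q l -> ~ In Q N -> In Q (unasked N l).
Proof.
  intros HQ; induction N as [|Q' N IH]; cbn; intros HN; [exact HQ |].
  apply in_in_remove; [intros ->; apply HN; left |]; auto.
Qed.

Lemma unasked_cons_length_lt Q N l :
  In Q l -> ~ In Q N -> length (unasked (Q :: N) l) < length (unasked N l).
Proof. intros; apply remove_length_lt, in_unasked; assumption. Qed.

Section Run.

Variables (n m : nat) (Pstar : query).

Let size_star := size_query Pstar.

(* Lexicographic in (work left on the sketch, unasked candidates): the multiplier exceeds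
   the bound [unasked_candidates_le] on the second component while [size_query P <= size_star]. *)
Definition potential (s : state) : nat :=
  (2 * (size_star - size_query (fst s)) + hole_count (fst s)) * ((m + 2 * n) * size_star + 1)
  + length (unasked (snd s) (candidates n m (fst s))).

Lemma unasked_candidates_le P N :
  size_query P <= size_star -> length (unasked N (candidates n m P)) <= (m + 2 * n) * size_star.
Proof.
  intros HP.
  pose proof (unasked_length_le N (candidates n m P)).
  rewrite length_candidates in *.
  pose proof (hole_count_le_size P) as Hholes; unfold hole_count in Hholes.
  pose proof (Nat.mul_le_mono_l _ _ (m + 2 * n) (Nat.le_trans _ _ _ Hholes HP)); nia.
Qed.

Lemma potential_le s :
  size_query (fst s) <= size_star ->
  potential s <= 2 * size_star * ((m + 2 * n) * size_star + 1) + (m + 2 * n) * size_star.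
Proof.
  destruct s as [P N]; cbn [fst] in *; intros HP; unfold potential; cbn [fst snd].
  pose proof (unasked_candidates_le P N HP).
  pose proof (hole_count_le_size P).
  assert (Hw : 2 * (size_star - size_query P) + hole_count P <= 2 * size_star) by lia.
  pose proof (Nat.mul_le_mono_r _ _ ((m + 2 * n) * size_star + 1) Hw); lia.
Qed.

Lemma potential_step_lt s s' : iter_step n m Pstar s s' -> potential s' < potential s.
Proof.
  intros [P N Q _ HQ _ D | P N Q _ HQ HN _]; unfold potential; cbn [fst snd].
  - pose proof (candidate_refine1 _ _ _ _ HQ) as R.
    pose proof (refine1_size_le _ _ _ _ R); pose proof (refine1_progress _ _ _ _ R).
    pose proof (derives_size_le _ _ _ _ D) as HQS; fold size_star in HQS.
    pose proof (unasked_candidates_le Q N HQS).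
    assert (Hw : 2 * (size_star - size_query Q) + hole_count Q + 1
                 <= 2 * (size_star - size_query P) + hole_count P) by lia.
    pose proof (Nat.mul_le_mono_r _ _ ((m + 2 * n) * size_star + 1) Hw); lia.
  - pose proof (unasked_cons_length_lt Q N _ HQ HN); lia.
Qed.

Lemma iter_n_le_potential k s s' : iter_n n m Pstar k s s' -> k <= potential s.
Proof.
  induction 1 as [| k s1 s2 s3 Hstep _ IH]; [lia |].
  pose proof (potential_step_lt _ _ Hstep); lia.
Qed.

Definition consistent (s : state) : Prop :=
  derives n m (fst s) Pstar /\ forall Q, In Q (snd s) -> ~ derives n m Q Pstar.

Lemma iter_step_consistent s s' : iter_step n m Pstar s s' -> consistent s -> consistent s'.
Proof.
  intros [P N Q _ _ _ D | P N Q _ _ _ D] [HP HN]; split; cbn in *; auto.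
  intros Q' [<- | HQ']; auto.
Qed.

Lemma reachable_consistent s s' :
  clos_refl_trans state (iter_step n m Pstar) s s' -> consistent s -> consistent s'.
Proof. induction 1; eauto using iter_step_consistent. Qed.

Lemma consistent_progress s :
  complete Pstar -> consistent s -> has_hole (fst s) -> exists s', iter_step n m Pstar s s'.
Proof.
  destruct s as [P N]; intros Hstar [D HN] Hhole; cbn in *.
  destruct (derives_candidate n m P Pstar Hstar D Hhole) as (Q & HQ & DQ).
  exists (Q, N); apply step_accept; auto.
  intros HQN; exact (HN Q HQN DQ).
Qed.

End Run.

Lemma iter_step_n_plus_m_pos n m Pstar s s' : iter_step n m Pstar s s' -> 0 < n + m.
Proof.
  intros [P N Q _ HQ _ _ | P N Q _ HQ _ _];
    apply in_candidates in HQ as [(? & ? & _ & ? & _) | (? & ? & _ & ? & _)]; lia.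
Qed.

Theorem theorem2 :
  exists C : nat,
    forall (n m : nat) (P0 Pstar : query),
      complete Pstar ->
      derives n m P0 Pstar ->
      (* every execution performs O((n+m) |Pstar|^2) iterations *)
      (forall (k : nat) (s : state),
          iter_n n m Pstar k (P0, []) s ->
          k <= C * (n + m) * (size_query Pstar) ^ 2)
      /\
      (* and never gets stuck: while the sketch has holes an iteration is possible *)
      (forall s : state,
          clos_refl_trans state (iter_step n m Pstar) (P0, []) s ->
          has_hole (fst s) ->
          exists s', iter_step n m Pstar s s').
Proof.
  exists 8; intros n m P0 Pstar Hstar D; split.
  - intros k s Hrun.
    destruct k as [| k]; [lia |].
    assert (Hnm : 0 < n + m) by (inversion Hrun; eauto using iter_step_n_plus_m_pos).
    pose proof (iter_n_le_potential n m Pstar _ _ _ Hrun) as Hk.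
    pose proof (derives_size_le _ _ _ _ D) as HP0.
    pose proof (potential_le n m Pstar (P0, []) HP0) as Hpot.
    set (sz := size_query Pstar) in *; clearbody sz.
    rewrite Nat.pow_2_r.
    assert (sz <= (n + m) * sz) by nia.
    assert ((n + m) * sz <= (n + m) * (sz * sz)) by (apply Nat.mul_le_mono_l; nia).
    nia.
  - intros s Hreach Hhole.
    apply (consistent_progress n m Pstar); [exact Hstar | | exact Hhole].
    apply (reachable_consistent n m Pstar (P0, [])); [exact Hreach |].
    split; [exact D | intros ? []].
Qed.
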